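(* Let $G=(V,E)$ be a connected undirected unweighted graph on $N\ge1$ vertices such that every vertex has degree $d_1$ or $d_2$, where $d_1\le d_2$. Let $n_1$ be the number of vertices of degree $d_1$ and $n_2$ the number of vertices of degree $d_2$ (so $N=n_1+n_2$). For $\delta\in[0,1]$ let $\rho_1(\delta)=\mathsf{fp}_{r=1}^\delta(G,\{u\})$ for any $u$ with $\deg(u)=d_1$ and $\rho_2(\delta)=\mathsf{fp}_{r=1}^\delta(G,\{u\})$ for any $u$ with $\deg(u)=d_2$. Then for all $\delta\in[0,1]$ the derivatives $\rho_1'(\delta)$ and $\rho_2'(\delta)$ exist and $$\rho_1'(\delta)=-n_2\,Q(\delta),\qquad\rho_2'(\delta)=n_1\,Q(\delta),\qquad Q(\delta)=\frac{(d_2-d_1)(d_1+d_2)}{D(\delta)^2},$$ where $D(\delta)=d_1n_2+d_2n_1+\delta(d_1-d_2)(n_1-n_2)$. If $d_1<d_2$, then $\rho_1'(\delta)<0$ and $\rho_2'(\delta)>0$ for all $\delta\in[0,1]$; otherwise $\rho_1'(\delta)=\rho_2'(\delta)=0$ for all $\delta$.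
   Context: Mixed $\delta$-updating on $G$: each vertex holds a mutant (fitness $r$) or wild-type (fitness $1$); $f_S(x)$ is the fitness at $x$ when $S$ is the mutant set. At each step, with probability $\delta$ a death-Birth step: choose $v$ uniformly to die, choose a neighbor $u$ of $v$ with probability proportional to $f_S(u)$, $u$ copies its type onto $v$; with probability $1-\delta$ a Birth-death step: choose $u$ with probability proportional to $f_S(u)$ among all vertices, choose a uniformly random neighbor $v$ of $u$, $u$ copies its type onto $v$. $\mathsf{fp}_r^\delta(G,S_0)$ is the probability all vertices eventually become mutant from initial mutant set $S_0$ (with $r=1$, the value for a single starting vertex depends only on its degree here). *)

From HB Require Import structures.
From mathcomp Require Import all_boot all_order all_algebra.
From mathcomp Require Import all_classical all_reals all_analysis.
Set Implicit Arguments. Unset Strict Implicit. Unset Printing Implicit Defensive.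
Import Order.TTheory GRing.Theory Num.Theory.
Import numFieldNormedType.Exports.
Local Open Scope classical_set_scope.
Local Open Scope ring_scope.

Section Moran.
Variables (R : realType) (V : finType) (e : rel V).

Definition deg (v : V) : nat := #|[set w | e v w]|.

(* fitness of vertex x when S is the mutant set *)
Definition fit (r : R) (S : {set V}) (x : V) : R := if x \in S then r else 1.

Definition upd (S : {set V}) (u v : V) : {set V} :=
  if u \in S then v |: S else S :\ v.

(* One step of mixed delta-updating, as an operator on functions h of the
   state: (step h) S = expected value of h after one step from S.
   If the chosen vertex has no neighbour (only possible when #|V| = 1)
   nothing happens. *)
Definition step (delta r : R) (h : {set V} -> R) (S : {set V}) : R :=
  delta * \sum_(v : V) (#|V|%:R)^-1 *
      (if deg v == 0%N then h S else
       \sum_(u | e v u) fit r S u / (\sum_(w | e v w) fit r S w) * h (upd S u v))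
  + (1 - delta) * \sum_(u : V) fit r S u / (\sum_(w : V) fit r S w) *
      (if deg u == 0%N then h S else
       \sum_(v | e u v) (deg u)%:R^-1 * h (upd S u v)).

Fixpoint pfull (delta r : R) (n : nat) : {set V} -> R :=
  match n with
  | 0 => fun S => if S == [set: V]%SET then 1 else 0
  | n'.+1 => step delta r (pfull delta r n')
  end.

(* fixation probability fp_r^delta(G, S0): since the all-mutant state is
   absorbing, it is the limit of the n-step probabilities of being all-mutant *)
Definition fp (r delta : R) (S0 : {set V}) : R :=
  limn (fun n => pfull delta r n S0).

End Moran.

(* f has derivative l at x, relative to the parameter domain [0,1]
   (one-sided at the endpoints) *)
Definition deriv01 (R : realType) (f : R -> R) (x l : R) : Prop :=
  ((fun h => (f h - f x) / (h - x)) @ within [set h : R | 0 <= h <= 1] (dnbhs x))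
    --> l.

From HB Require Import structures.
From mathcomp Require Import all_boot all_order all_algebra.
From mathcomp Require Import all_classical all_reals all_analysis.
From mathcomp Require Import ring lra.
Import Order.TTheory GRing.Theory Num.Theory.
Import numFieldNormedType.Exports.
Set Implicit Arguments.
Unset Strict Implicit.
Unset Printing Implicit Defensive.
Local Open Scope ring_scope.

(* With neutral fitness, the mutant weight [\sum_(v in S) p v] is a harmonic
   function of the state [S] as soon as the weights satisfy detailed balance,
   [c(u,v) p(v) = c(v,u) p(u)], for the rates [c] at which [u] copies onto [v].
   The absorption probabilities into the all-mutant and the empty state are
   the limits of iterating the step on their indicators; they are bounded by
   the normalised weight and by its complement, while their sum is a harmonic
   function which, by the minimum principle on the connected graph, is at
   least 1.  Hence the fixation probability from [S] is [p(S)/p(V)].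
   On a graph with two degrees [d1 <> d2], the weight of [v] is [delta] times
   its own degree plus [1 - delta] times the other degree; this is balanced,
   sums to [D(delta)], and makes [rho_i] a ratio of affine functions of
   [delta].  Regular graphs give the constant [1/N]. *)

Section Graph.
Variables (V : finType) (e : rel V).

Lemma degE v : deg e v = #|[pred w | e v w]|.
Proof. by apply: eq_card => w; rewrite !inE /=; apply/asboolP/idP. Qed.

Lemma deg_eq0 v : deg e v = 0%N -> forall w, e v w = false.
Proof. by rewrite degE => /card0_eq H w; have := H w; rewrite !inE. Qed.

Lemma deg_gt0 u v : e u v -> (0 < deg e u)%N.
Proof. by move=> euv; rewrite degE; apply/card_gt0P; exists v. Qed.

Lemma sum_neighbours_const (R : pzSemiRingType) v (c : R) :
  \sum_(w | e v w) c = (deg e v)%:R * c.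
Proof. by rewrite sumr_const degE mulr_natl. Qed.

Lemma connected_cut_edge (S : {set V}) x y :
  symmetric e -> (forall u v, connect e u v) -> x \in S -> y \notin S ->
  exists u v, [/\ u \in S, v \notin S & e u v].
Proof.
move=> e_sym e_con xS yS.
have [/existsP[u /existsP[v /and3P[uS vS euv]]]|no_cut] :=
  boolP [exists u, exists v, [&& u \in S, v \notin S & e u v]].
  by exists u, v.
have S_closed : fingraph.closed e S.
  move=> a b eab; apply/idP/idP => [aS|bS]; apply: contraNT no_cut => nS.
    by apply/existsP; exists a; apply/existsP; exists b; rewrite aS nS eab.
  by apply/existsP; exists b; apply/existsP; exists a; rewrite bS nS e_sym.
by move: yS; rewrite -(closed_connect S_closed (e_con x y)) xS.
Qed.

End Graph.

Lemma upd_setT (V : finType) (u v : V) : upd [set: V]%SET u v = [set: V]%SET.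
Proof. by rewrite /upd inE finset.setUT. Qed.

Lemma upd_set0 (V : finType) (u v : V) : upd finset.set0 u v = finset.set0.
Proof. by rewrite /upd inE finset.set0D. Qed.

Definition weight (R : nmodType) (V : finType) (p : V -> R) (X : {set V}) : R :=
  \sum_(v in X) p v.

Lemma weight_upd (R : zmodType) (V : finType) (p : V -> R) S u v :
  weight p (upd S u v) - weight p S =
  if u \in S then (if v \in S then 0 else p v) else (if v \in S then - p v else 0).
Proof.
rewrite /upd /weight; case: ifP => uS; case: ifP => vS.
- have -> : v |: S = S by apply/setP => x; rewrite !inE; case: eqP => // ->.
  by rewrite subrr.
- by rewrite big_setU1 ?vS //= addrK.
- by rewrite [X in _ - X](big_setD1 _ vS) /= opprD addrCA subrr addr0.
- have -> : S :\ v = S.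
    by apply/setP => x; rewrite !inE; case: eqP => // ->; rewrite vS.
  by rewrite subrr.
Qed.

Lemma weight_bounds (R : numDomainType) (V : finType) (p : V -> R) X :
  (forall v, 0 <= p v) -> 0 <= weight p X <= weight p [set: V]%SET.
Proof.
move=> p_ge0; rewrite /weight sumr_ge0 //=.
rewrite big_mkcond [X in _ <= X]big_mkcond; apply: ler_sum => v _.
by rewrite inE; case: ifP.
Qed.

Section NeutralStep.
Variables (R : realType) (V : finType) (e : rel V) (t : R).
Hypotheses (e_sym : symmetric e) (V_gt0 : (0 < #|V|)%N).

Lemma fit_neutral (S : {set V}) : fit (1 : R) S = fun=> 1.
Proof. by apply/funext => x; rewrite /fit if_same. Qed.

Lemma sum_edges_sym (F : V -> V -> R) :
  \sum_u \sum_(v | e u v) F u v = \sum_u \sum_(v | e u v) F v u.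
Proof.
rewrite (exchange_big_dep predT) //=; apply: eq_bigr => v _.
by apply: eq_bigl => u; rewrite e_sym.
Qed.

Lemma neighbour_meanE v a (f : V -> R) :
  (if deg e v == 0%N then a else \sum_(u | e v u) (deg e v)%:R^-1 * f u)
  = a + \sum_(u | e v u) (deg e v)%:R^-1 * (f u - a).
Proof.
case: eqP => [/deg_eq0 no_edge | /eqP deg_neq0].
  by rewrite big_pred0 ?addr0.
under [in RHS]eq_bigr do rewrite mulrBr.
rewrite sumrB sum_neighbours_const mulrA mulfV ?pnatr_eq0 //.
by rewrite mul1r addrC subrK.
Qed.

(* In a dB step, v dies (probability 1/N) and u is the chosen neighbour
   (1/deg v); in a Bd step, u reproduces (1/N) onto the neighbour v (1/deg u). *)
Definition copy_rate (u v : V) : R :=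
  (t / (deg e v)%:R + (1 - t) / (deg e u)%:R) / #|V|%:R.

Lemma stepE h S : step e t 1 h S =
  h S + \sum_u \sum_(v | e u v) copy_rate u v * (h (upd S u v) - h S).
Proof.
have N_neq0 : #|V|%:R != 0 :> R by rewrite pnatr_eq0 -lt0n.
have uniform_mean (G : V -> R) :
    \sum_v #|V|%:R^-1 * (h S + G v) = h S + \sum_v #|V|%:R^-1 * G v.
  under eq_bigr do rewrite mulrDr.
  rewrite big_split /= sumr_const -mulrnAr -[h S *+ _]mulr_natl.
  by rewrite mulrA mulVf ?mul1r.
rewrite /step fit_neutral /= sumr_const.
under eq_bigr => v _.
  rewrite sum_neighbours_const mulr1.
  under eq_bigr do rewrite div1r.
  rewrite neighbour_meanE.
  over.
under [X in _ + _ * X]eq_bigr do rewrite div1r neighbour_meanE.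
rewrite !uniform_mean.
under [X in t * (_ + X)]eq_bigr do rewrite mulr_sumr.
rewrite sum_edges_sym.
transitivity (h S + (t * \sum_u \sum_(v | e u v)
    #|V|%:R^-1 * ((deg e v)%:R^-1 * (h (upd S u v) - h S)) +
  (1 - t) * \sum_u #|V|%:R^-1 * \sum_(v | e u v)
    (deg e u)%:R^-1 * (h (upd S u v) - h S))); first by ring.
congr (_ + _); rewrite !mulr_sumr -big_split; apply: eq_bigr => u _ /=.
rewrite !mulr_sumr -big_split; apply: eq_bigr => v _ /=.
by rewrite /copy_rate; ring.
Qed.

Lemma stepD h g S :
  step e t 1 (fun X => h X + g X) S = step e t 1 h S + step e t 1 g S.
Proof.
rewrite !stepE addrACA -big_split; congr (_ + _); apply: eq_bigr => u _ /=.
by rewrite -big_split; apply: eq_bigr => v _ /=; ring.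
Qed.

Lemma step_affine a b h S :
  step e t 1 (fun X => a + b * h X) S = a + b * step e t 1 h S.
Proof.
rewrite !stepE mulrDr mulr_sumr addrA; congr (_ + _); apply: eq_bigr => u _.
by rewrite mulr_sumr; apply: eq_bigr => v _; ring.
Qed.

Lemma step_absorbing h S : (forall u v, upd S u v = S) -> step e t 1 h S = h S.
Proof.
move=> S_abs; rewrite stepE big1 ?addr0 // => u _.
by rewrite big1 // => v _; rewrite S_abs subrr mulr0.
Qed.

Hypothesis t01 : 0 <= t <= 1.

Lemma step_mono h g S :
  (forall X, h X <= g X) -> step e t 1 h S <= step e t 1 g S.
Proof.
case/andP: t01 => t0 t1 hg; have t1' : 0 <= 1 - t by rewrite subr_ge0.
have sum1_ge0 (P : pred V) : 0 <= \sum_(w | P w) (1 : R) by exact: sumr_ge0.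
rewrite /step fit_neutral /=.
apply: lerD; apply: ler_wpM2l => //; apply: ler_sum => v _.
  apply: ler_wpM2l; first by rewrite invr_ge0.
  case: ifP => _ //; apply: ler_sum => u _; apply: ler_wpM2l => //.
  exact: divr_ge0.
apply: ler_wpM2l; first exact: divr_ge0.
case: ifP => _ //; apply: ler_sum => w _; apply: ler_wpM2l => //.
Qed.

Lemma copy_rate_gt0 u v : e u v -> 0 < copy_rate u v.
Proof.
case/andP: t01 => t0 t1 euv.
have du : 0 < (deg e u)%:R :> R by rewrite ltr0n; exact: deg_gt0 euv.
have dv : 0 < (deg e v)%:R :> R.
  by rewrite ltr0n; apply: (@deg_gt0 _ e v u); rewrite e_sym.
rewrite /copy_rate divr_gt0 ?ltr0n //.
have [->|t_neq0] := eqVneq t 0; first by rewrite mul0r add0r subr0 div1r invr_gt0.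
apply: ltr_wpDr; first by apply: divr_ge0; rewrite ?subr_ge0.
by apply: divr_gt0 => //; rewrite lt_def t_neq0 t0.
Qed.

Lemma step_cst a S : step e t 1 (fun=> a) S = a.
Proof.
rewrite stepE big1 ?addr0 // => u _.
by rewrite big1 // => v _; rewrite subrr mulr0.
Qed.

Definition harmonic (h : {set V} -> R) := forall X, step e t 1 h X = h X.

Lemma harmonic_affine h g a b :
  harmonic h -> (forall X, g X = a + b * h X) -> harmonic g.
Proof.
move=> h_harm gE X; have -> : g = (fun Y => a + b * h Y) by apply/funext.
by rewrite step_affine h_harm.
Qed.

Lemma harmonic_min_upd g S u v :
  harmonic g -> (forall X, g S <= g X) -> e u v -> g (upd S u v) = g S.
Proof.
move=> g_harm g_min euv.
have term_ge0 w x : e w x -> 0 <= copy_rate w x * (g (upd S w x) - g S).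
  by move=> ewx; rewrite mulr_ge0 ?subr_ge0 // ltW // copy_rate_gt0.
have /eqP := g_harm S; rewrite stepE addrC -subr_eq0 addrK => /eqP sum0.
have outer := psumr_eq0P (fun w _ => sumr_ge0 _ (term_ge0 w)) sum0.
have /eqP := psumr_eq0P (term_ge0 u) (outer u isT) euv.
by rewrite mulf_eq0 gt_eqF ?copy_rate_gt0 //= subr_eq0 => /eqP.
Qed.

Hypothesis e_con : forall u v, connect e u v.

(* The minimum spreads along a cut edge of the connected graph, one vertex at
   a time, until it reaches the all-mutant state. *)
Lemma harmonic_min_setT g m S : harmonic g -> (forall X, m <= g X) ->
  S != finset.set0 -> g S = m -> g [set: V]%SET = m.
Proof.
move=> g_harm g_ge; move: {2}#|~: S| (leqnn #|~: S|) => k.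
elim: k S => [|k IH] S S_le S_neq0 gS.
  move: S_le; rewrite leqn0 cards_eq0 => /eqP compl0.
  by rewrite -gS -[S]finset.setCK compl0 finset.setC0.
have [<-//|S_neqT] := eqVneq S [set: V]%SET.
have [x xS] := set0Pn _ S_neq0.
have /subsetPn[y _ yS] : ~~ ([set: V]%SET \subset S) by rewrite finset.subTset.
have [u [v [uS vS euv]]] := connected_cut_edge e_sym e_con xS yS.
have g_min X : g S <= g X by rewrite gS.
have := harmonic_min_upd g_harm g_min euv; rewrite /upd uS gS => gvS.
apply: (IH (v |: S)) => //; last by apply/set0Pn; exists v; exact: setU11.
have -> : ~: (v |: S) = ~: S :\ v by rewrite finset.setDE finset.setCU finset.setIC.
by move: S_le; rewrite (cardsD1 v (~: S)) inE vS add1n ltnS.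
Qed.

Lemma harmonic_ge g m : harmonic g ->
  m <= g finset.set0 -> m <= g [set: V]%SET -> forall X, m <= g X.
Proof.
move=> g_harm m0 mT X.
have [Smin _ g_min] := @arg_minP _ _ {set V} finset.set0 predT g isT.
apply: le_trans (g_min X isT).
have [->//|Smin_neq0] := eqVneq Smin finset.set0.
by rewrite -(harmonic_min_setT g_harm (fun Y => g_min Y isT) Smin_neq0 erefl).
Qed.

Local Notation iter_step n h := (iter n (step e t 1) h).

Lemma iter_step_le_harmonic h H n X : (forall X, h X <= H X) -> harmonic H ->
  iter_step n h X <= H X.
Proof.
move=> hH H_harm; elim: n X => [|n IH] X //=.
by rewrite -H_harm; exact: step_mono.
Qed.

Lemma iter_step_nondecreasing h X : (forall X, h X <= step e t 1 h X) ->
  nondecreasing_seq (fun n => iter_step n h X).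
Proof.
move=> h_sub; apply/nondecreasing_seqP => n; elim: n X => [|n IH] X /=.
  exact: h_sub.
exact: step_mono.
Qed.

Lemma harmonic_limn h : (forall X, cvgn (fun n => iter_step n h X)) ->
  harmonic (fun X => limn (fun n => iter_step n h X)).
Proof.
move=> h_cvg S; set l := fun X => limn _.
have step_cvg : ((fun n => iter_step n.+1 h S) @ \oo --> step e t 1 l S)%classic.
  rewrite stepE; under eq_fun do rewrite /= stepE.
  apply: cvgD; first exact: h_cvg.
  apply: (cvg_big (@add_continuous _)) => u _.
  apply: (cvg_big (@add_continuous _)) => v _.
  by apply: cvgMr; apply: cvgB; exact: h_cvg.
by move: step_cvg; rewrite (cvg_shiftS (fun n => iter_step n h S)) => /cvg_lim ->.
Qed.

Definition state_indicator (A X : {set V}) : R := if X == A then 1 else 0.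

Definition absorption (A X : {set V}) : R :=
  limn (fun n => iter_step n (state_indicator A) X).

Section Absorbing.
Variable A : {set V}.
Hypothesis A_absorbing : forall u v, upd A u v = A.

Lemma state_indicator_sub X :
  state_indicator A X <= step e t 1 (state_indicator A) X.
Proof.
rewrite {1}/state_indicator; case: eqP => [->|_].
  by rewrite step_absorbing /state_indicator ?eqxx.
rewrite -(step_cst 0 X); apply: step_mono => Y.
by rewrite /state_indicator; case: ifP.
Qed.

Lemma state_indicator_le1 X : state_indicator A X <= 1.
Proof. by rewrite /state_indicator; case: ifP. Qed.

Lemma absorption_cvg X : cvgn (fun n => iter_step n (state_indicator A) X).
Proof.
apply: cvgP; apply: nondecreasing_cvgn.
  exact: iter_step_nondecreasing X state_indicator_sub.
exists 1 => _ [n _ <-]; apply: iter_step_le_harmonic => //.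
exact: state_indicator_le1.
by move=> Y; exact: step_cst.
Qed.

Lemma absorption_le H : harmonic H -> (forall X, state_indicator A X <= H X) ->
  forall X, absorption A X <= H X.
Proof.
move=> H_harm indH X; apply: limr_le; first exact: absorption_cvg.
by apply: nearW => n; exact: iter_step_le_harmonic.
Qed.

Lemma absorption_ge X : state_indicator A X <= absorption A X.
Proof.
exact: (nondecreasing_cvgn_le (iter_step_nondecreasing X state_indicator_sub)
  (@absorption_cvg X) 0).
Qed.

Lemma absorption_harmonic : harmonic (absorption A).
Proof. exact: harmonic_limn absorption_cvg. Qed.

End Absorbing.

Lemma absorption_total X :
  1 <= absorption [set: V]%SET X + absorption finset.set0 X.
Proof.
have [setT_abs set0_abs] := (@upd_setT V, @upd_set0 V).
pose g Y := absorption [set: V]%SET Y + absorption finset.set0 Y.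
have indicators_le Y :
    state_indicator [set: V]%SET Y + state_indicator finset.set0 Y <= g Y.
  by apply: lerD; apply: absorption_ge.
apply: (@harmonic_ge g) => [Y||].
- by rewrite stepD !absorption_harmonic.
- apply: le_trans (indicators_le _); rewrite /state_indicator eqxx.
  by case: ifP; rewrite ?lerDr ?lerDl.
- apply: le_trans (indicators_le _); rewrite /state_indicator eqxx.
  by case: ifP; rewrite ?lerDr ?lerDl.
Qed.

Lemma fp_absorption S : fp e 1 t S = absorption [set: V]%SET S.
Proof.
have pfull_iter n : pfull e t 1 n = iter_step n (state_indicator [set: V]%SET).
  by elim: n => //= n ->.
by rewrite /fp /absorption; congr (limn _); apply/funext => n; rewrite pfull_iter.
Qed.

Definition balanced (p : V -> R) :=
  forall u v, e u v -> copy_rate u v * p v = copy_rate v u * p u.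

Lemma harmonic_weight p : balanced p -> harmonic (weight p).
Proof.
move=> p_bal S; rewrite stepE.
pose flux u v := if (u \in S) && (v \notin S) then copy_rate u v * p v else 0.
have -> : \sum_u \sum_(v | e u v) copy_rate u v * (weight p (upd S u v) - weight p S)
    = \sum_u \sum_(v | e u v) (flux u v - flux v u).
  apply: eq_bigr => u _; apply: eq_bigr => v euv; rewrite weight_upd /flux.
  case: (u \in S); case: (v \in S) => /=; rewrite ?mulr0 ?subrr ?subr0 ?sub0r //.
  by rewrite mulrN (p_bal _ _ euv).
by under eq_bigr do rewrite sumrB; rewrite sumrB sum_edges_sym subrr addr0.
Qed.

Lemma fp_balanced p S : (forall v, 0 <= p v) -> 0 < weight p [set: V]%SET ->
  balanced p -> fp e 1 t S = weight p S / weight p [set: V]%SET.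
Proof.
move=> p_ge0 W_gt0 p_bal; set W := weight p [set: V]%SET.
have [setT_abs set0_abs] := (@upd_setT V, @upd_set0 V).
pose H X := weight p X / W.
have H_harm : harmonic H.
  by apply: (@harmonic_affine (weight p) H 0 W^-1 (harmonic_weight p_bal)) => X;
    rewrite add0r mulrC.
have H01 X : 0 <= H X <= 1.
  have /andP[w0 w1] := weight_bounds X p_ge0.
  by rewrite divr_ge0 ?ler_pdivrMr ?mul1r // ltW.
have fp_le : absorption [set: V]%SET S <= H S.
  apply: (absorption_le setT_abs H_harm) => X.
  rewrite /state_indicator; case: eqP => [->|_].
    by rewrite /H divff // gt_eqF.
  by case/andP: (H01 X).
have extinction_le : absorption finset.set0 S <= 1 - H S.
  have H'_harm : harmonic (fun X => 1 - H X).
    by apply: (@harmonic_affine H _ 1 (-1) H_harm) => X; rewrite mulN1r.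
  apply: (absorption_le set0_abs H'_harm) => X.
  rewrite /state_indicator; case: eqP => [->|_].
    by rewrite /H /weight big_set0 mul0r subr0.
  by rewrite subr_ge0; case/andP: (H01 X).
have := absorption_total S; rewrite fp_absorption -/(H S); lra.
Qed.

End NeutralStep.

Lemma deriv01_ratio (R : realType) (f : R -> R) (a b c d x : R) :
  0 <= x <= 1 -> (forall t, 0 <= t <= 1 -> 0 < c + d * t) ->
  (forall t, 0 <= t <= 1 -> f t = (a + b * t) / (c + d * t)) ->
  deriv01 f x ((b * c - a * d) / (c + d * x) ^+ 2).
Proof.
move=> x01 den_gt0 fE; have den_x := den_gt0 x x01.
pose k h := (b * c - a * d) * ((c + d * h) * (c + d * x))^-1.
have k_cvg : (k @ nbhs x --> (b * c - a * d) / (c + d * x) ^+ 2)%classic.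
  rewrite expr2; apply: cvgMr; apply: cvgV; first by rewrite mulf_neq0 // gt_eqF.
  by apply: cvgMl; apply: cvgD; [exact: cvg_cst | apply: cvgMr; exact: cvg_id].
have near_k : \forall h \near within [set h : R | 0 <= h <= 1]%classic (dnbhs x),
    k h = (f h - f x) / (h - x).
  near=> h.
  have /andP[h0 h1] : 0 <= h <= 1.
    by near: h; exact: (@near_withinT _ (dnbhs x) [set h : R | 0 <= h <= 1]%classic).
  have h_neq_x : h != x.
    near: h; apply: (@cvg_within _ (dnbhs x) _ [set h : R | 0 <= h <= 1]%classic).
    exact: (@nbhs_dnbhs_neq R x).
  have den_h : 0 < c + d * h by apply: den_gt0; rewrite h0 h1.
  rewrite /k !fE ?h0 ?h1 //; field.
  by rewrite subr_eq0 h_neq_x !gt_eqF.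
apply: cvg_trans (near_eq_cvg near_k) _.
by do 2 apply: cvg_within_filter.
Unshelve. all: by end_near.
Qed.

Lemma deriv01_cst (R : realType) (f : R -> R) (a x : R) :
  0 <= x <= 1 -> (forall t, 0 <= t <= 1 -> f t = a) -> deriv01 f x 0.
Proof.
move=> x01 fE.
have := @deriv01_ratio R f a 0 1 0 x x01 _ _; rewrite !mul0r mulr0 subr0 mul0r.
apply=> [t _|t t01]; first by rewrite mul0r addr0.
by rewrite fE // mul0r !addr0 divr1.
Qed.

Lemma fp_regular (R : realType) (V : finType) (e : rel V) k (t : R) S :
  symmetric e -> (forall u v, connect e u v) -> (0 < #|V|)%N -> 0 <= t <= 1 ->
  (forall v, deg e v = k) -> fp e 1 t S = #|S|%:R / #|V|%:R.
Proof.
move=> e_sym e_con V_gt0 t01 regular.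
have weight1 X : weight (fun=> 1 : R) X = #|X|%:R by rewrite /weight sumr_const.
rewrite (fp_balanced e_sym V_gt0 t01 e_con _ (fun=> ler01)) ?weight1 ?cardsT //.
  by rewrite ltr0n.
by move=> u v _; rewrite /copy_rate !regular.
Qed.

Section TwoDegrees.
Variables (R : realType) (V : finType) (e : rel V) (d1 d2 : nat).
Hypotheses (e_sym : symmetric e) (e_con : forall u v, connect e u v)
  (V_gt0 : (0 < #|V|)%N) (degs : forall v, deg e v = d1 \/ deg e v = d2).

Local Notation n1 := #|[set v : V | deg e v == d1]|.
Local Notation n2 := #|[set v : V | deg e v == d2]|.

Definition total_weight (t : R) : R :=
  d1%:R * n2%:R + d2%:R * n1%:R + t * (d1%:R - d2%:R) * (n1%:R - n2%:R).

Definition fp_slope (t : R) : R :=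
  (d2%:R - d1%:R) * (d1%:R + d2%:R) / (total_weight t) ^+ 2.

(* [(d1 + d2) - deg v] is the degree of the other class. *)
Definition two_degree_weight (t : R) (v : V) : R :=
  t * (deg e v)%:R + (1 - t) * ((d1 + d2)%:R - (deg e v)%:R).

Lemma two_degree_weight_d1 t v :
  deg e v = d1 -> two_degree_weight t v = t * d1%:R + (1 - t) * d2%:R.
Proof. by move=> dv; rewrite /two_degree_weight dv natrD; ring. Qed.

Lemma two_degree_weight_d2 t v :
  deg e v = d2 -> two_degree_weight t v = t * d2%:R + (1 - t) * d1%:R.
Proof. by move=> dv; rewrite /two_degree_weight dv natrD; ring. Qed.

Lemma two_degree_weight_ge0 t v : 0 <= t <= 1 -> 0 <= two_degree_weight t v.
Proof.
case/andP=> t0 t1; have t1' : 0 <= 1 - t by rewrite subr_ge0.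
case: (degs v) => dv.
  by rewrite two_degree_weight_d1 // addr_ge0 ?mulr_ge0.
by rewrite two_degree_weight_d2 // addr_ge0 ?mulr_ge0.
Qed.

(* Both endpoints of an edge have the same degree, or their degrees sum to
   [d1 + d2]; either way the weight ratio matches the copy rates. *)
Lemma two_degree_weight_balanced t : balanced e t (two_degree_weight t).
Proof.
move=> u v euv.
have du : (deg e u)%:R != 0 :> R by rewrite pnatr_eq0 -lt0n (deg_gt0 euv).
have dv : (deg e v)%:R != 0 :> R.
  by rewrite pnatr_eq0 -lt0n (@deg_gt0 _ e v u) // e_sym.
have N_neq0 : #|V|%:R != 0 :> R by rewrite pnatr_eq0 -lt0n.
have [same|sum] : deg e u = deg e v \/ (deg e u + deg e v = d1 + d2)%N.
  by case: (degs u) (degs v) => -> [] ->; auto; right; rewrite addnC.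
  by rewrite /two_degree_weight /copy_rate same.
rewrite /two_degree_weight /copy_rate -sum natrD !addrK addrAC subrr add0r.
by field; rewrite du dv N_neq0.
Qed.

Lemma total_weightE t : d1 != d2 ->
  weight (two_degree_weight t) [set: V]%SET = total_weight t.
Proof.
move=> d12; rewrite /weight (eq_bigl predT) => [|v]; last by rewrite inE.
rewrite (bigID (fun v => deg e v == d1)) /=.
rewrite (eq_bigr (fun=> t * d1%:R + (1 - t) * d2%:R)); last first.
  by move=> v /eqP; exact: two_degree_weight_d1.
rewrite [X in _ + X](eq_bigl (fun v => deg e v == d2)); last first.
  move=> v; case: (degs v) => ->; rewrite eqxx ?(negbTE d12) //.
  by rewrite eq_sym (negbTE d12).
rewrite [X in _ + X](eq_bigr (fun=> t * d2%:R + (1 - t) * d1%:R)); last first.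
  by move=> v /eqP; exact: two_degree_weight_d2.
rewrite !sumr_const /total_weight !cardsE.
by rewrite -[(_ + _) *+ _]mulr_natr -[(_ + _) *+ _]mulr_natr; ring.
Qed.

Lemma total_weight_gt0 t : d1 != d2 -> (0 < n1)%N -> (0 < n2)%N ->
  0 <= t <= 1 -> 0 < total_weight t.
Proof.
move=> d12 n1_gt0 n2_gt0 /andP[t0 t1].
have d_gt0 : (0 < d1 + d2)%N.
  by move: d12; case: (d1) (d2) => [|?] [|?].
have at0 : 0 < (d1 * n2 + d2 * n1)%:R :> R.
  by rewrite ltr0n addn_gt0 !muln_gt0 n1_gt0 n2_gt0 !andbT -addn_gt0.
have at1 : 0 < (d1 * n1 + d2 * n2)%:R :> R.
  by rewrite ltr0n addn_gt0 !muln_gt0 n1_gt0 n2_gt0 !andbT -addn_gt0.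
have -> : total_weight t =
    (1 - t) * (d1 * n2 + d2 * n1)%:R + t * (d1 * n1 + d2 * n2)%:R.
  by rewrite /total_weight !natrD !natrM; ring.
have [->|t_neq0] := eqVneq t 0; first by rewrite subr0 mul1r mul0r addr0.
apply: ltr_wpDl; first by rewrite mulr_ge0 ?subr_ge0 // ltW.
by rewrite mulr_gt0 // lt_def t_neq0.
Qed.

Lemma fp_slope_gt0 t : (d1 < d2)%N -> (0 < n1)%N -> (0 < n2)%N ->
  0 <= t <= 1 -> 0 < fp_slope t.
Proof.
move=> lt12 n1_gt0 n2_gt0 t01.
rewrite /fp_slope divr_gt0 ?exprn_gt0 ?total_weight_gt0 ?ltn_eqF // mulr_gt0 //.
  by rewrite subr_gt0 ltr_nat.
by rewrite -natrD ltr0n addn_gt0 (leq_ltn_trans _ lt12) ?orbT.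
Qed.

Lemma fp_two_degrees t u : d1 != d2 -> (0 < n1)%N -> (0 < n2)%N -> 0 <= t <= 1 ->
  fp e 1 t [set u] = two_degree_weight t u / total_weight t.
Proof.
move=> d12 n1_gt0 n2_gt0 t01.
rewrite (fp_balanced e_sym V_gt0 t01 e_con _ (fun v => two_degree_weight_ge0 v t01)).
- by rewrite total_weightE // /weight big_set1.
- by rewrite total_weightE // total_weight_gt0.
- exact: two_degree_weight_balanced.
Qed.

Lemma deg_all_d1 : d1 = d2 \/ n2 = 0%N -> forall v, deg e v = d1.
Proof.
move=> degenerate v; case: (degs v) => // dv; case: degenerate => [-> //|].
by move/card0_eq/(_ v); rewrite !inE dv eqxx.
Qed.

Lemma deriv_fp_deg1 u x : 0 <= x <= 1 -> deg e u = d1 ->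
  deriv01 (fun t => fp e 1 t [set u]) x (- (n2%:R * fp_slope x)).
Proof.
move=> x01 du.
have n1_gt0 : (0 < n1)%N by apply/card_gt0P; exists u; rewrite inE du.
have [degenerate|[d12 n2_gt0]] : (d1 = d2 \/ n2 = 0%N) \/ (d1 != d2 /\ (0 < n2)%N).
  case: eqVneq => [|d12]; first by left; left.
  by case: posnP => [|n2_gt0]; [left; right | right].
- have -> : - (n2%:R * fp_slope x) = 0.
    case: degenerate => [d12|->]; last by rewrite mul0r oppr0.
    by rewrite /fp_slope d12 subrr !mul0r mulr0 oppr0.
  apply: deriv01_cst x01 _ => t t01.
  exact: fp_regular e_sym e_con V_gt0 t01 (deg_all_d1 degenerate).
- pose c := d1%:R * n2%:R + d2%:R * n1%:R : R.
  pose d := (d1%:R - d2%:R) * (n1%:R - n2%:R) : R.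
  have weightE t : total_weight t = c + d * t by rewrite /total_weight /c /d; ring.
  have den_gt0 t : 0 <= t <= 1 -> 0 < c + d * t.
    by move=> t01; rewrite -weightE total_weight_gt0.
  have -> : - (n2%:R * fp_slope x) =
      ((d1%:R - d2%:R) * c - d2%:R * d) / (c + d * x) ^+ 2.
    have : c + d * x != 0 by rewrite gt_eqF ?den_gt0.
    by rewrite /fp_slope weightE /c /d => den_neq0; field.
  apply: deriv01_ratio x01 den_gt0 _ => t t01.
  rewrite fp_two_degrees // two_degree_weight_d1 // weightE.
  by congr (_ / _); ring.
Qed.

End TwoDegrees.

Lemma fp_slope_swap (R : realType) (V : finType) (e : rel V) d1 d2 (t : R) :
  fp_slope e d2 d1 t = - fp_slope e d1 d2 t.
Proof.
rewrite /fp_slope -mulNr.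
have -> : total_weight e d2 d1 t = total_weight e d1 d2 t.
  by rewrite /total_weight; ring.
by congr (_ * _); ring.
Qed.

Theorem mainTheorem18 (R : realType) (V : finType) (e : rel V) (d1 d2 : nat) :
  symmetric e -> irreflexive e -> (0 < #|V|)%N ->
  (forall u v : V, connect e u v) ->
  (d1 <= d2)%N ->
  (forall v : V, deg e v = d1 \/ deg e v = d2) ->
  let n1 := #|[set v : V | deg e v == d1]| in
  let n2 := #|[set v : V | deg e v == d2]| in
  let D := fun delta : R =>
    d1%:R * n2%:R + d2%:R * n1%:R
    + delta * (d1%:R - d2%:R) * (n1%:R - n2%:R) in
  let Q := fun delta : R => (d2%:R - d1%:R) * (d1%:R + d2%:R) / (D delta) ^+ 2 in
  forall delta : R, 0 <= delta <= 1 ->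
    (forall u : V, deg e u = d1 ->
       deriv01 (fun t : R => fp e 1 t [set u]) delta (- (n2%:R * Q delta)))
    /\ (forall u : V, deg e u = d2 ->
       deriv01 (fun t : R => fp e 1 t [set u]) delta (n1%:R * Q delta))
    /\ ((d1 < d2)%N -> (0 < n1)%N -> (0 < n2)%N ->
          - (n2%:R * Q delta) < 0 /\ 0 < n1%:R * Q delta)
    /\ (d1 = d2 -> - (n2%:R * Q delta) = 0 /\ n1%:R * Q delta = 0).
Proof.
(* Self-loops never change the state and the formulas are symmetric in the
   two degree classes. *)
move=> e_sym _ V_gt0 e_con _ degs n1 n2 D Q delta delta01.
have degs_swap v : deg e v = d2 \/ deg e v = d1 by case: (degs v); [right | left].
split; [|split; [|split]].
- by move=> u du; exact (deriv_fp_deg1 e_sym e_con V_gt0 degs delta01 du).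
- move=> u du.
  have -> : n1%:R * Q delta = - (n1%:R * fp_slope e d2 d1 delta).
    by rewrite fp_slope_swap mulrN opprK.
  exact (deriv_fp_deg1 e_sym e_con V_gt0 degs_swap delta01 du).
- move=> lt12 n1_gt0 n2_gt0.
  have Q_gt0 : 0 < Q delta := fp_slope_gt0 lt12 n1_gt0 n2_gt0 delta01.
  by split; rewrite ?oppr_lt0 mulr_gt0 ?ltr0n.
- move=> d12; have Q0 : Q delta = 0 by rewrite /Q d12 subrr !mul0r.
  by rewrite Q0 !mulr0 oppr0.
Qed.
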